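(* Let $C_k(T)=T-\sin(Tk)/\sin k$. Fix $\alpha\in\{1/3,1/7\}$, and for $T\in\mathbb N^+$ let $k_1<k_2<\dots<k_T$ be the $T$ solutions in $(0,\pi)$ of $-\alpha\tan(k/2)=\tan(Tk)$. There exists $T_0\in\mathbb N^+$ such that for all $T>T_0$: (1) $C_{k_t}(T)/C_{k_t}(2T)\le5/6$ for $t=2,3,\dots,T-1$; (2) $C_{k_1}(T)/C_{k_1}(2T)^2\le1/96$ and $C_{k_T}(T)/C_{k_T}(2T)^2\le1/96$. *)

From Stdlib Require Import Reals Lra Lia.
Open Scope R_scope.

Definition Cfun (k : R) (T : nat) : R := INR T - sin (INR T * k) / sin k.

(* k is a solution in (0, pi) of  -alpha tan(k/2) = tan(T k).
   We require cos (T k) <> 0 so that tan (T k) is genuinely defined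
   (Stdlib's tan is total with x/0 = 0). *)
Definition is_sol (alpha : R) (T : nat) (k : R) : Prop :=
  0 < k < PI /\ cos (INR T * k) <> 0 /\ - alpha * tan (k / 2) = tan (INR T * k).

Definition sol_enum (alpha : R) (T : nat) (ks : nat -> R) : Prop :=
  (forall t, (1 <= t < T)%nat -> ks t < ks (S t)) /\
  (forall t, (1 <= t <= T)%nat -> is_sol alpha T (ks t)) /\
  (forall k, is_sol alpha T k -> exists t, (1 <= t <= T)%nat /\ ks t = k).

From Stdlib Require Import Reals Lra Lia.
Open Scope R_scope.

(* Only alpha > 0 matters. For a solution k, tan (T k) = - alpha tan (k/2) < 0, so
   sin (2 T k) < 0 and C_k(2T) > 2T, while |sin (T k)| <= T sin k gives C_k(T) <= 2T;
   this yields (2) as soon as T >= 48. Moreover tan (T k) decreases along the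
   solutions while tan is increasing on each branch, so no two solutions have T k in
   the same interval (m pi, (m+1) pi). Hence k_2 >= pi/T and k_(T-1) <= pi - pi/T, so
   sin k_t >= pi/(2T) for 2 <= t <= T-1, and C_(k_t)(T) <= T + 2T/pi < 5T/3. *)

Lemma Rdiv_le_of_le_mul a b c : 0 < b -> a <= c * b -> a / b <= c.
Proof.
  intros Hb Hab. apply (Rmult_le_reg_r b); [exact Hb|].
  unfold Rdiv. rewrite Rmult_assoc, Rinv_l, Rmult_1_r by lra. exact Hab.
Qed.

Lemma Rabs_sin_mult_le n x : Rabs (sin (INR n * x)) <= INR n * Rabs (sin x).
Proof.
  induction n as [|n IH].
  - change (INR 0) with 0. rewrite Rmult_0_l, sin_0, Rabs_R0. lra.
  - rewrite S_INR, Rmult_plus_distr_r, Rmult_1_l, sin_plus.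
    eapply Rle_trans; [apply Rabs_triang|]. rewrite !Rabs_mult.
    assert (Rabs (cos x) <= 1) by (apply Rabs_le; apply COS_bound).
    assert (Rabs (cos (INR n * x)) <= 1) by (apply Rabs_le; apply COS_bound).
    pose proof (Rabs_pos (sin (INR n * x))). pose proof (Rabs_pos (sin x)).
    nra.
Qed.

Lemma sin_mult_div_sin_le n x : 0 < sin x -> - (sin (INR n * x) / sin x) <= INR n.
Proof.
  intros Hx. apply Ropp_le_cancel. rewrite Ropp_involutive.
  apply (Rmult_le_reg_r (sin x)); [exact Hx|].
  unfold Rdiv. rewrite Rmult_assoc, Rinv_l by lra.
  pose proof (Rabs_sin_mult_le n x) as Hn. rewrite (Rabs_right (sin x)) in Hn by lra.
  pose proof (Rle_abs (- sin (INR n * x))) as Hm. rewrite Rabs_Ropp in Hm. lra.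
Qed.

Lemma Cfun_le_double k T : 0 < sin k -> Cfun k T <= 2 * INR T.
Proof. intros Hk. unfold Cfun. pose proof (sin_mult_div_sin_le T k Hk). lra. Qed.

Lemma Cfun_le_add_inv_sin k T : 0 < sin k -> Cfun k T <= INR T + / sin k.
Proof.
  intros Hk. unfold Cfun, Rdiv.
  pose proof (SIN_bound (INR T * k)). pose proof (Rinv_0_lt_compat _ Hk). nra.
Qed.

Lemma Cfun_gt_of_sin_neg k T : 0 < sin k -> sin (INR T * k) < 0 -> INR T < Cfun k T.
Proof.
  intros Hk HTk. unfold Cfun.
  assert (sin (INR T * k) / sin k < 0) by (apply Rdiv_neg_pos; lra). lra.
Qed.

Lemma sin_ge_half u : 0 <= u <= 1 -> u / 2 <= sin u.
Proof.
  intros Hu. destruct (pre_sin_bound u 0 ltac:(lra) ltac:(lra)) as [Hlb _].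
  unfold sin_approx, sin_term in Hlb. simpl in Hlb. nra.
Qed.

Lemma sin_ge_on_inner_interval u k : 0 <= u <= PI / 2 -> u <= k <= PI - u -> sin u <= sin k.
Proof.
  intros Hu Hk. pose proof PI_RGT_0. destruct (Rle_or_lt k (PI / 2)).
  - apply sin_incr_1; lra.
  - rewrite <- (sin_PI_x k). apply sin_incr_1; lra.
Qed.

Lemma sin_mul_pos_same_interval m a b :
  INR m * PI < a < (INR m + 1) * PI -> INR m * PI < b < (INR m + 1) * PI ->
  0 < sin a * sin b.
Proof.
  intros Ha Hb.
  assert (Hs : sin (INR m * PI) = 0).
  { apply sin_eq_0_1. exists (Z.of_nat m). now rewrite INR_IZR_INZ. }
  assert (Hc : (cos (INR m * PI))² = 1) by (pose proof (sin2_cos2 (INR m * PI)) as E;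
    rewrite Hs, Rsqr_0 in E; lra).
  replace a with ((a - INR m * PI) + INR m * PI) by ring.
  replace b with ((b - INR m * PI) + INR m * PI) by ring.
  rewrite !sin_plus, Hs.
  assert (0 < sin (a - INR m * PI)) by (apply sin_gt_0; lra).
  assert (0 < sin (b - INR m * PI)) by (apply sin_gt_0; lra).
  rewrite !Rmult_0_r, !Rplus_0_r.
  replace (sin (a - INR m * PI) * cos (INR m * PI) * (sin (b - INR m * PI) * cos (INR m * PI)))
    with (sin (a - INR m * PI) * sin (b - INR m * PI) * (cos (INR m * PI))²)
    by (unfold Rsqr; ring).
  rewrite Hc. nra.
Qed.

Lemma tan_lt_of_cos_mul_pos a b : a < b -> b - a < PI -> 0 < cos a * cos b -> tan a < tan b.
Proof.
  intros Hab Hba Hc.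
  assert (tan b - tan a = sin (b - a) / (cos a * cos b)) as E.
  { unfold tan. rewrite sin_minus. field. split; intro E; rewrite E in Hc; lra. }
  assert (0 < sin (b - a) / (cos a * cos b)) by (apply Rdiv_lt_0_compat; [apply sin_gt_0|]; lra).
  lra.
Qed.

Section Solutions.

Variable alpha : R.
Hypothesis alpha_pos : 0 < alpha.
Variable T : nat.

Lemma sol_tan_neg k : is_sol alpha T k -> tan (INR T * k) < 0.
Proof.
  intros [Hk [_ E]]. rewrite <- E.
  assert (0 < tan (k / 2)) by (apply tan_gt_0; lra). nra.
Qed.

Lemma sol_T_pos k : is_sol alpha T k -> (0 < T)%nat.
Proof.
  intros Hs. pose proof (sol_tan_neg k Hs) as Ht. destruct T; [|lia].
  change (INR 0) with 0 in Ht. rewrite Rmult_0_l, tan_0 in Ht. lra.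
Qed.

Lemma sol_sin_cos_neg k : is_sol alpha T k -> sin (INR T * k) * cos (INR T * k) < 0.
Proof.
  intros Hs. pose proof (sol_tan_neg k Hs) as Ht. destruct Hs as [_ [Hc _]].
  unfold tan in Ht.
  replace (sin (INR T * k) * cos (INR T * k)) with
    (sin (INR T * k) / cos (INR T * k) * (cos (INR T * k))²) by (unfold Rsqr; field; auto).
  pose proof (Rsqr_pos_lt _ Hc). nra.
Qed.

Lemma sol_sin_double_neg k : is_sol alpha T k -> sin (INR (2 * T) * k) < 0.
Proof.
  intros Hs. pose proof (sol_sin_cos_neg k Hs).
  rewrite mult_INR, Rmult_assoc, sin_2a. simpl (INR 2). lra.
Qed.

Lemma sol_tan_decreasing k k' :
  is_sol alpha T k -> is_sol alpha T k' -> k < k' -> tan (INR T * k') < tan (INR T * k).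
Proof.
  intros [Hk [_ E]] [Hk' [_ E']] Hkk'. rewrite <- E, <- E'.
  assert (tan (k / 2) < tan (k' / 2)) by (apply tan_increasing; lra). nra.
Qed.

Lemma sol_not_same_interval k k' m : is_sol alpha T k -> is_sol alpha T k' -> k < k' ->
  INR m * PI < INR T * k -> INR T * k' < (INR m + 1) * PI -> False.
Proof.
  intros Hs Hs' Hkk' Hm Hm'.
  assert (HT : 0 < INR T) by (apply lt_0_INR, (sol_T_pos k Hs)).
  assert (HTk : INR T * k < INR T * k') by (apply Rmult_lt_compat_l; lra).
  pose proof (sol_sin_cos_neg k Hs). pose proof (sol_sin_cos_neg k' Hs').
  pose proof (sin_mul_pos_same_interval m (INR T * k) (INR T * k') ltac:(lra) ltac:(lra)).
  assert (0 < cos (INR T * k) * cos (INR T * k')).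
  { destruct (Rle_or_lt (cos (INR T * k) * cos (INR T * k')) 0); [nra|auto]. }
  assert (tan (INR T * k) < tan (INR T * k')) by (apply tan_lt_of_cos_mul_pos; lra).
  pose proof (sol_tan_decreasing k k' Hs Hs' Hkk'). lra.
Qed.

Lemma sol_Cfun_double_gt k : is_sol alpha T k -> 2 * INR T < Cfun k (2 * T).
Proof.
  intros Hs. pose proof (sol_sin_double_neg k Hs). destruct Hs as [Hk _].
  rewrite <- (mult_INR 2). apply Cfun_gt_of_sin_neg; [apply sin_gt_0; lra | assumption].
Qed.

Lemma sol_Cfun_ratio_sq_le k :
  is_sol alpha T k -> Cfun k T / (Cfun k (2 * T)) ^ 2 <= / (2 * INR T).
Proof.
  intros Hs. pose proof (sol_Cfun_double_gt k Hs).
  assert (HT : 0 < INR T) by (apply lt_0_INR, (sol_T_pos k Hs)).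
  destruct Hs as [Hk _].
  pose proof (Cfun_le_double k T ltac:(apply sin_gt_0; lra)).
  apply Rdiv_le_of_le_mul; [nra|].
  apply (Rmult_le_reg_l (2 * INR T)); [lra|].
  rewrite <- Rmult_assoc, Rinv_r, Rmult_1_l by lra. nra.
Qed.

Lemma sol_Cfun_ratio_le k : (4 <= T)%nat -> is_sol alpha T k ->
  PI / INR T <= k <= PI - PI / INR T -> Cfun k T / Cfun k (2 * T) <= 5 / 6.
Proof.
  intros HT4 Hs Hk. pose proof (sol_Cfun_double_gt k Hs).
  assert (HT : 4 <= INR T) by (apply (le_INR 4) in HT4; simpl in HT4; lra).
  pose proof PI2_3_2. pose proof PI_4.
  set (u := PI / INR T) in Hk.
  assert (Hu : 0 < u <= 1).
  { unfold u. split; [apply Rdiv_lt_0_compat; lra|].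
    apply Rdiv_le_of_le_mul; lra. }
  assert (Hsin : u / 2 <= sin k).
  { eapply Rle_trans; [apply sin_ge_half; lra|].
    apply sin_ge_on_inner_interval; lra. }
  assert (Hinv : / sin k <= 2 / 3 * INR T).
  { replace (2 / 3 * INR T) with (/ (3 / 2 / INR T)) by (field; lra).
    apply Rinv_le_contravar; [apply Rdiv_lt_0_compat; lra|].
    apply Rle_trans with (u / 2); [|exact Hsin].
    replace (3 / 2 / INR T) with (3 / 2 * / INR T) by (field; lra).
    replace (u / 2) with (PI / 2 * / INR T) by (unfold u; field; lra).
    apply Rmult_le_compat_r; [left; apply Rinv_0_lt_compat|]; lra. }
  pose proof (Cfun_le_add_inv_sin k T ltac:(lra)).
  apply Rdiv_le_of_le_mul; lra.
Qed.

Variable ks : nat -> R.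
Hypothesis ks_enum : sol_enum alpha T ks.

Lemma sol_enum_le i j : (1 <= i)%nat -> (i <= j <= T)%nat -> ks i <= ks j.
Proof.
  destruct ks_enum as [Hinc _]. intros Hi [Hij HjT]. induction Hij as [|j Hij IH].
  - lra.
  - apply Rle_trans with (ks j); [apply IH; lia | left; apply Hinc; lia].
Qed.

Lemma sol_enum_second_ge : (2 <= T)%nat -> PI / INR T <= ks 2.
Proof.
  destruct ks_enum as [Hinc [Hsol _]]. intros HT2.
  assert (HT : 0 < INR T) by (apply lt_0_INR; lia).
  destruct (Rle_or_lt (PI / INR T) (ks 2)) as [|Hlt]; [assumption|exfalso].
  pose proof (Hsol 1%nat ltac:(lia)) as [[Hk1 _] _].
  apply (sol_not_same_interval (ks 1) (ks 2) 0);
    [apply Hsol; lia | apply Hsol; lia | apply Hinc; lia | simpl; nra |].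
  apply (Rmult_lt_compat_l (INR T)) in Hlt; [|lra].
  replace (INR T * (PI / INR T)) with PI in Hlt by (field; lra). simpl. lra.
Qed.

Lemma sol_enum_penultimate_le : (2 <= T)%nat -> ks (T - 1) <= PI - PI / INR T.
Proof.
  destruct ks_enum as [Hinc [Hsol _]]. intros HT2.
  assert (HT : 0 < INR T) by (apply lt_0_INR; lia).
  destruct (Rle_or_lt (ks (T - 1)) (PI - PI / INR T)) as [|Hlt]; [assumption|exfalso].
  pose proof (Hsol T ltac:(lia)) as [[_ HkT] _].
  assert (ET : S (T - 1) = T) by lia.
  apply (sol_not_same_interval (ks (T - 1)) (ks T) (T - 1));
    [apply Hsol; lia | apply Hsol; lia | rewrite <- ET at 2; apply Hinc; lia | |].
  - apply (Rmult_lt_compat_l (INR T)) in Hlt; [|lra].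
    rewrite minus_INR by lia. simpl.
    replace (INR T * (PI - PI / INR T)) with ((INR T - 1) * PI) in Hlt by (field; lra). lra.
  - rewrite minus_INR by lia. simpl. replace (INR T - 1 + 1) with (INR T) by ring.
    apply Rmult_lt_compat_l; lra.
Qed.

Lemma sol_enum_inner_range t : (2 <= t <= T - 1)%nat ->
  PI / INR T <= ks t <= PI - PI / INR T.
Proof.
  intros Ht. split.
  - apply Rle_trans with (ks 2); [apply sol_enum_second_ge | apply sol_enum_le]; lia.
  - apply Rle_trans with (ks (T - 1)); [apply sol_enum_le | apply sol_enum_penultimate_le]; lia.
Qed.

End Solutions.

Theorem lemma13 (alpha : R) (Halpha : alpha = 1/3 \/ alpha = 1/7) :
  exists T0 : nat, (0 < T0)%nat /\
    forall (T : nat) (ks : nat -> R), (T0 < T)%nat -> sol_enum alpha T ks ->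
      (forall t, (2 <= t <= T - 1)%nat ->
         Cfun (ks t) T / Cfun (ks t) (2 * T) <= 5/6) /\
      Cfun (ks 1%nat) T / (Cfun (ks 1%nat) (2 * T)) ^ 2 <= 1/96 /\
      Cfun (ks T) T / (Cfun (ks T) (2 * T)) ^ 2 <= 1/96.
Proof.
  assert (Hpos : 0 < alpha) by (destruct Halpha; lra).
  exists 48%nat. split; [lia|]. intros T ks HT Hks.
  assert (HTr : 48 < INR T) by (apply (lt_INR 48) in HT; simpl in HT; lra).
  pose proof Hks as [_ [Hsol _]].
  assert (Hedge : forall k, is_sol alpha T k -> Cfun k T / (Cfun k (2 * T)) ^ 2 <= 1/96).
  { intros k Hk. eapply Rle_trans; [apply (sol_Cfun_ratio_sq_le alpha Hpos T k Hk)|].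
    rewrite <- Rdiv_1_l. apply Rmult_le_compat_l, Rinv_le_contravar; lra. }
  split; [|split; apply Hedge, Hsol; lia].
  intros t Ht. apply (sol_Cfun_ratio_le alpha Hpos T); [lia | apply Hsol; lia |].
  apply (sol_enum_inner_range alpha Hpos T ks Hks). exact Ht.
Qed.
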